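(* Let $a\in\mathbb F^*$, let $g,h\in\mathcal R$ with $x^n-a=hg$, and let $c=\gamma(a,g)$. Then the map $$\psi:\mathcal S_a\to\mathcal S_{\theta^{-n}(c)},\qquad \overline f\mapsto\overline{f\,\theta^{-n}(h)}$$ is a well-defined left $\mathcal R$-module homomorphism with $\ker\psi=\mathcal R\overline g$.
   Context: $\mathbb F$ is a finite field, $\theta\in\mathrm{Aut}(\mathbb F)$, $\mathcal R=\mathbb F[x;\theta]$ the skew polynomial ring (elements $\sum f_ix^i$ with left coefficients, $xb=\theta(b)x$), $n\in\mathbb N$. Integer powers of $\theta$ act on $\mathcal R$ coefficientwise. For $e\in\mathbb F^*$, $\mathcal S_e=\mathcal R/\mathcal R(x^n-e)$ (left $\mathcal R$-module), $\overline f$ the coset of $f$, $\mathcal R\overline g$ the left submodule of $\mathcal S_a$ generated by $\overline g$. For a right divisor $g=\sum g_ix^i$ of $x^n-a$, $\gamma(a,g)=a\,g_0^{-1}\theta^n(g_0)$. *)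

From HB Require Import structures.
From mathcomp Require Import all_boot all_order all_algebra all_field.
Set Implicit Arguments. Unset Strict Implicit. Unset Printing Implicit Defensive.
Import GRing.Theory.
Local Open Scope ring_scope.

(* Skew polynomial ring F[x; theta]: elements are represented by their
   (left) coefficient sequences, i.e. by {poly F}; addition is the usual one
   and multiplication is the skew product determined by x b = theta(b) x:
     (sum_i f_i x^i) (sum_j g_j x^j) = sum_{i,j} f_i theta^i(g_j) x^(i+j). *)
Definition skmul {F : fieldType} (theta : F -> F) (f g : {poly F}) : {poly F} :=
  \sum_(i < size f) (f`_i *: 'X^i) * map_poly (iter i theta) g.

Definition skmap {F : fieldType} (sigma : F -> F) (k : nat) (f : {poly F}) :
  {poly F} := map_poly (iter k sigma) f.

(* Congruence modulo the left ideal R (x^n - e): f1 and f2 have the same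
   coset in S_e = R / R(x^n - e). *)
Definition skcong {F : fieldType} (theta : F -> F) (n : nat) (e : F)
  (f1 f2 : {poly F}) : Prop :=
  exists q : {poly F}, f1 - f2 = skmul theta q ('X^n - e%:P).

Definition skgamma {F : fieldType} (theta : F -> F) (n : nat) (a : F)
  (g : {poly F}) : F :=
  a * (g`_0)^-1 * iter n theta (g`_0).

From HB Require Import structures.
From mathcomp Require Import all_boot all_order all_algebra all_field.
From mathcomp Require Import zify ring.
Import GRing.Theory.
Local Open Scope ring_scope.
Set Implicit Arguments. Unset Strict Implicit. Unset Printing Implicit Defensive.

(* Skew multiplication has no zero divisors and adds degrees.  From
   x^n - a = h g one gets theta^n(g) h = x^n - c: both sides, multiplied on
   the right by g, equal theta^n(g) x^n up to terms of degree at most deg g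
   (because x^n g = theta^n(g) x^n), so their difference is a constant, which
   vanishes by comparing constant coefficients.  Applying theta^-n yields
   g theta^-n(h) = x^n - theta^-n(c).  Hence right multiplication by
   theta^-n(h) maps R (x^n - a) = R h g into R g theta^-n(h) =
   R (x^n - theta^-n(c)), and f theta^-n(h) lies in the latter ideal exactly
   when f lies in R g. *)

Section IterRMorphism.
Variables (R : pzRingType) (f : {rmorphism R -> R}) (k : nat).

Lemma iter_zmod_morphism : zmod_morphism (iter k f).
Proof. by elim: k => // m IH x y /=; rewrite IH rmorphB. Qed.

Lemma iter_monoid_morphism : monoid_morphism (iter k f).
Proof.
split; first by elim: k => //= m ->; rewrite rmorph1.
by elim: k => // m IH x y /=; rewrite IH rmorphM.
Qed.

HB.instance Definition _ :=
  GRing.isZmodMorphism.Build R R (iter k f) iter_zmod_morphism.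
HB.instance Definition _ :=
  GRing.isMonoidMorphism.Build R R (iter k f) iter_monoid_morphism.

End IterRMorphism.

Lemma iter_can (T : Type) (f g : T -> T) k :
  cancel f g -> cancel (iter k f) (iter k g).
Proof. by move=> fK; elim: k => // k IH x; rewrite [iter k.+1 f x]iterS iterSr fK IH. Qed.

Section SkewPolynomials.
Variables (F : fieldType) (th : {rmorphism F -> F}).
Local Notation sk := (skmul th).

Lemma coef_skmul f g k :
  (sk f g)`_k = \sum_(i < k.+1) f`_i * iter i th g`_(k - i).
Proof.
rewrite /skmul coef_sum.
under eq_bigr => i _ do rewrite -scalerAl coefZ coefXnM coef_map_id0 ?rmorph0 //.
rewrite (big_ord_widen (size f + k.+1)
  (fun i => f`_i * (if (k < i)%N then 0 else iter i th g`_(k - i)))) ?leq_addr //.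
rewrite (big_ord_widen (size f + k.+1) (fun i => f`_i * iter i th g`_(k - i)))
  ?leq_addl //.
rewrite big_mkcond [RHS]big_mkcond; apply: eq_bigr => i _ /=.
have [hf|hf] := ltnP i (size f); have [hk|hk] := ltnP k i.
- by rewrite ltnS leqNgt hk /= mulr0.
- by rewrite ltnS hk.
- by rewrite ltnS leqNgt hk.
- by rewrite ltnS hk nth_default // mul0r.
Qed.

Lemma coef0_skmul f g : (sk f g)`_0 = f`_0 * g`_0.
Proof. by rewrite coef_skmul big_ord_recl big_ord0 addr0. Qed.

Lemma skmul0l g : sk 0 g = 0.
Proof. by apply/polyP => k; rewrite coef_skmul coef0 big1 // => i _; rewrite coef0 mul0r. Qed.

Lemma skmul0r f : sk f 0 = 0.
Proof.
by apply/polyP => k; rewrite coef_skmul coef0 big1 // => i _; rewrite coef0 rmorph0 mulr0.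
Qed.

Lemma skmulDl f1 f2 g : sk (f1 + f2) g = sk f1 g + sk f2 g.
Proof.
apply/polyP => k; rewrite coefD !coef_skmul -big_split /=.
by apply: eq_bigr => i _; rewrite coefD mulrDl.
Qed.

Lemma skmulDr f g1 g2 : sk f (g1 + g2) = sk f g1 + sk f g2.
Proof.
apply/polyP => k; rewrite coefD !coef_skmul -big_split /=.
by apply: eq_bigr => i _; rewrite coefD rmorphD mulrDr.
Qed.

Lemma skmulBl f1 f2 g : sk (f1 - f2) g = sk f1 g - sk f2 g.
Proof. by apply: (addIr (sk f2 g)); rewrite -skmulDl !subrK. Qed.

Lemma skmulBr f g1 g2 : sk f (g1 - g2) = sk f g1 - sk f g2.
Proof. by apply: (addIr (sk f g2)); rewrite -skmulDr !subrK. Qed.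

Lemma skmul_suml (I : Type) (r : seq I) (P : pred I) (G : I -> {poly F}) g :
  sk (\sum_(i <- r | P i) G i) g = \sum_(i <- r | P i) sk (G i) g.
Proof. exact: (big_morph (sk^~ g) (fun f1 f2 => skmulDl f1 f2 g) (skmul0l g)). Qed.

Lemma skmul_sumr (I : Type) (r : seq I) (P : pred I) (G : I -> {poly F}) f :
  sk f (\sum_(i <- r | P i) G i) = \sum_(i <- r | P i) sk f (G i).
Proof. exact: (big_morph (sk f) (skmulDr f) (skmul0r f)). Qed.

Lemma skmulZXnl c i p : sk (c *: 'X^i) p = c *: ('X^i * map_poly (iter i th) p).
Proof.
apply/polyP => k; rewrite coef_skmul coefZ coefXnM coef_map_id0 ?rmorph0 //.
under eq_bigr => j _ do rewrite coefZ coefXn.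
case: ltnP => hk.
  rewrite mulr0 big1 // => j _.
  by rewrite (ltn_eqF (leq_trans (ltn_ord j) hk)) mulr0 mul0r.
rewrite (bigD1 (Ordinal (hk : (i < k.+1)%N))) //= eqxx mulr1 big1 ?addr0 //.
by move=> j; rewrite -val_eqE /= => /negPf ->; rewrite mulr0 mul0r.
Qed.

Lemma skmul_expandl f g : sk f g = \sum_(i < size f) sk (f`_i *: 'X^i) g.
Proof. by apply: eq_bigr => i _; rewrite skmulZXnl scalerAl. Qed.

Lemma skmul_expandr f g : sk f g = \sum_(j < size g) sk f (g`_j *: 'X^j).
Proof.
have {1}-> : g = \sum_(j < size g) g`_j *: 'X^j by rewrite -poly_def coefK.
exact: skmul_sumr.
Qed.

Lemma map_iter_comp i j p :
  map_poly (iter i th) (map_poly (iter j th) p) = map_poly (iter (i + j) th) p.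
Proof. by rewrite -map_poly_comp; apply: eq_map_poly => x /=; rewrite iterD. Qed.

Lemma skmul_monomial b i c j :
  sk (b *: 'X^i) (c *: 'X^j) = (b * iter i th c) *: 'X^(i + j).
Proof.
by rewrite skmulZXnl map_polyZ map_polyXn -scalerAr scalerA exprD.
Qed.

Lemma skmulA_monomial b i c j h :
  sk (sk (b *: 'X^i) (c *: 'X^j)) h = sk (b *: 'X^i) (sk (c *: 'X^j) h).
Proof.
rewrite skmul_monomial !skmulZXnl map_polyZ rmorphM /= map_polyXn map_iter_comp.
by rewrite -!scalerAr scalerA mulrA exprD.
Qed.

Lemma skmulA f g h : sk (sk f g) h = sk f (sk g h).
Proof.
rewrite (skmul_expandl f g) (skmul_expandl f (sk g h)) skmul_suml.
apply: eq_bigr => i _.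
rewrite (skmul_expandr _ g) (skmul_expandl g h) skmul_suml skmul_sumr.
by apply: eq_bigr => j _; rewrite skmulA_monomial.
Qed.

Lemma skmulCl c p : sk c%:P p = c *: p.
Proof.
apply/polyP => k; rewrite coef_skmul big_ord_recl coefC eqxx /= coefZ subn0.
by rewrite big1 ?addr0 // => i _; rewrite coefC /= mul0r.
Qed.

Lemma skmulXnl m p : sk 'X^m p = 'X^m * map_poly (iter m th) p.
Proof. by have := skmulZXnl 1 m p; rewrite !scale1r. Qed.

Lemma skmulXnr p m : sk p 'X^m = p * 'X^m.
Proof.
rewrite /skmul; under eq_bigr => i _ do rewrite map_polyXn.
by rewrite -mulr_suml -poly_def coefK.
Qed.

Lemma size_skmul_leq f g : (size (sk f g) <= (size f + size g).-1)%N.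
Proof.
apply/leq_sizeP => j hj; rewrite coef_skmul big1 // => i _.
have [hf|hf] := ltnP i (size f); last by rewrite nth_default ?mul0r.
by rewrite (nth_default 0 (_ : size g <= j - i)%N) ?rmorph0 ?mulr0 //; lia.
Qed.

Lemma lead_coef_skmul f g : f != 0 -> g != 0 ->
  (sk f g)`_((size f).-1 + (size g).-1) =
  lead_coef f * iter (size f).-1 th (lead_coef g).
Proof.
rewrite -!size_poly_gt0 => f0 g0; rewrite coef_skmul.
have hm : ((size f).-1 < ((size f).-1 + (size g).-1).+1)%N by lia.
rewrite (bigD1 (Ordinal hm)) //= addKn -!lead_coefE big1 ?addr0 // => i.
rewrite -val_eqE /= => hi; have [hl|hl] := ltnP i (size f).-1.
  rewrite (nth_default 0 (_ : size g <= _ - i)%N) ?rmorph0 ?mulr0 //.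
  by move: hl g0; case: (size f) (size g) (nat_of_ord i) => [|u] v w /=; lia.
rewrite nth_default ?mul0r //.
by move: hi hl f0; case: (size f) (nat_of_ord i) => [|u] w /=; lia.
Qed.

Lemma size_skmul f g : f != 0 -> g != 0 -> size (sk f g) = (size f + size g).-1.
Proof.
move=> f0 g0; apply/eqP; rewrite eqn_leq size_skmul_leq /=.
have nz : (sk f g)`_((size f).-1 + (size g).-1) != 0.
  by rewrite lead_coef_skmul // mulf_neq0 ?fmorph_eq0 ?lead_coef_eq0.
rewrite leqNgt; apply: contra nz => hs; apply/eqP; rewrite nth_default //.
move: hs f0 g0; rewrite -!size_poly_gt0.
by case: (size f) (size g) => [|u] [|v] /=; lia.
Qed.

Lemma skmul_eq0 f g : (sk f g == 0) = (f == 0) || (g == 0).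
Proof.
have [->|f0] := eqVneq f 0; first by rewrite skmul0l eqxx.
have [->|g0] := eqVneq g 0; first by rewrite skmul0r eqxx.
rewrite -size_poly_eq0 size_skmul //.
by move: f0 g0; rewrite -!size_poly_gt0; lia.
Qed.

Lemma map_skmul (s : {rmorphism F -> F}) : s \o th =1 th \o s ->
  forall f g, map_poly s (sk f g) = sk (map_poly s f) (map_poly s g).
Proof.
move=> sth f g; have siter i x : s (iter i th x) = iter i th (s x).
  by elim: i => //= i IH; rewrite -IH; exact: sth.
apply/polyP => k; rewrite coef_map_id0 ?rmorph0 // !coef_skmul rmorph_sum.
by apply: eq_bigr => i _; rewrite rmorphM !coef_map siter.
Qed.

Lemma skfactor_coef0_neq0 n a g h : (0 < n)%N -> a != 0 ->
  'X^n - a%:P = sk h g -> g`_0 != 0.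
Proof.
move=> n0 a0 /(congr1 (coefp 0)) /=.
rewrite coef0_skmul coefB coefXn coefC /= (ltn_eqF n0) sub0r.
by move=> E; apply: contra_neq a0 => g0; apply/eqP; rewrite -oppr_eq0 E g0 mulr0.
Qed.

Lemma skfactor_swap n a g h : 'X^n - a%:P = sk h g -> g`_0 != 0 ->
  sk (map_poly (iter n th) g) h = 'X^n - (skgamma th n a g)%:P.
Proof.
move=> hg g0_neq0; set g1 := map_poly (iter n th) g; set c := skgamma th n a g.
set P := sk g1 h - ('X^n - c%:P).
have PgE : sk P g = c *: g - sk g1 a%:P.
  rewrite skmulBl skmulA -hg skmulBr skmulXnr skmulBl skmulXnl skmulCl.
  by rewrite -/g1 -(commr_polyXn g1 n); ring.
have g_neq0 : g != 0 by apply: contraNneq g0_neq0 => ->; rewrite coef0.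
have sizeP : (size P <= 1)%N.
  have [->|P_neq0] := eqVneq P 0; first by rewrite size_poly0.
  have : (size (c *: g - sk g1 a%:P)%R <= size g)%N.
    rewrite (leq_trans (size_polyD _ _)) // geq_max size_polyN size_scale_leq.
    rewrite (leq_trans (size_skmul_leq _ _)) //.
    rewrite size_map_inj_poly ?rmorph0 //; last exact: fmorph_inj.
    by rewrite -subn1 leq_subLR addnC leq_add2r size_polyC_leq1.
  by rewrite -PgE size_skmul // -subn1 leq_subLR leq_add2r.
have P00 : P`_0 * g`_0 = 0.
  have /(congr1 (coefp 0)) /= := PgE.
  rewrite coef0_skmul (coefB (c *: g)) coefZ coef0_skmul coefC /= coef_map /= => ->.
  by rewrite /c /skgamma mulrAC divfK // mulrC subrr.
apply/eqP; rewrite -subr_eq0 -/P (size1_polyC sizeP).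
by move/eqP: P00; rewrite mulf_eq0 (negPf g0_neq0) orbF => /eqP ->.
Qed.

Lemma skfactor_swap_inv (thi : F -> F) n a g h :
  cancel th thi -> cancel thi th ->
  'X^n - a%:P = sk h g -> g`_0 != 0 ->
  sk g (skmap thi n h) = 'X^n - (iter n thi (skgamma th n a g))%:P.
Proof.
move=> thK thiK hg g0_neq0; apply: (@map_poly_inj _ _ (iter n th)).
rewrite map_skmul => [|x /=]; last by rewrite -iterSr iterS.
rewrite (map_polyK (iter_can n thiK)) ?rmorph0 // (skfactor_swap hg g0_neq0).
by rewrite rmorphB /= map_polyXn map_polyC /= iter_can.
Qed.

Lemma eq_skcong n e f1 f2 : f1 = f2 -> skcong th n e f1 f2.
Proof. by move=> ->; exists 0; rewrite skmul0l subrr. Qed.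

Section Cofactor.
Variables (n : nat) (a c : F) (g h h' : {poly F}).
Hypotheses (n_gt0 : (0 < n)%N) (hg : 'X^n - a%:P = sk h g)
  (gh' : sk g h' = 'X^n - c%:P).

Lemma skcong_mulr f1 f2 :
  skcong th n a f1 f2 -> skcong th n c (sk f1 h') (sk f2 h').
Proof. by case=> q Hq; exists (sk q h); rewrite -skmulBl Hq hg -gh' !skmulA. Qed.

Lemma skcong_mulr0 f :
  skcong th n c (sk f h') 0 <-> exists r, skcong th n a f (sk r g).
Proof.
split=> [[q Hq]|[r [q Hq]]].
  exists q; apply: eq_skcong; apply/eqP; rewrite -subr_eq0.
  have h'0 : h' != 0.
    by apply/eqP=> h'0; have := size_XnsubC c n_gt0; rewrite -gh' h'0 skmul0r size_poly0.
  have : sk (f - sk q g) h' == 0 by rewrite skmulBl skmulA gh' -Hq subr0 subrr.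
  by rewrite skmul_eq0 (negPf h'0) orbF.
exists (r + sk q h); rewrite subr0 -gh' -skmulA skmulDl skmulA -hg -Hq.
by rewrite addrC subrK.
Qed.

End Cofactor.

End SkewPolynomials.

Theorem proposition6p5 (F : finFieldType) (theta : {rmorphism F -> F})
    (thetainv : F -> F) (Hinv1 : cancel theta thetainv)
    (Hinv2 : cancel thetainv theta)
    (n : nat) (Hn : (0 < n)%N) (a : F) (Ha : a != 0) (g h : {poly F})
    (Hhg : 'X^n - a%:P = skmul theta h g) :
  let c := skgamma theta n a g in
  let c' := iter n thetainv c in
  let psi := fun f : {poly F} => skmul theta f (skmap thetainv n h) in
  [/\ (forall f1 f2, skcong theta n a f1 f2 ->
          skcong theta n c' (psi f1) (psi f2)),
      (forall f1 f2, skcong theta n c' (psi (f1 + f2)) (psi f1 + psi f2)),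
      (forall r f, skcong theta n c' (psi (skmul theta r f))
                                     (skmul theta r (psi f)))
    & (forall f, skcong theta n c' (psi f) 0 <->
          exists r : {poly F}, skcong theta n a f (skmul theta r g))].
Proof.
move=> c c' psi.
have g0_neq0 := skfactor_coef0_neq0 Hn Ha Hhg.
have gh' := skfactor_swap_inv Hinv1 Hinv2 Hhg g0_neq0.
split.
- exact: skcong_mulr Hhg gh'.
- by move=> f1 f2; apply: eq_skcong; rewrite /psi skmulDl.
- by move=> r f; apply: eq_skcong; rewrite /psi skmulA.
- exact: skcong_mulr0 Hn Hhg gh'.
Qed.
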